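(* Assume (A1), (A2), (A3), and that for each class $c\in[C]$ the revision protocol $\rho^c$ is imitative via comparison, excess payoff, or pairwise comparison. If $\mu\in X$ is a mixed stationary Nash equilibrium, then $\mu$ is a rest point of the master equation, i.e., $f^{c,d}_{s,u}(\mu)+f^{c,r}_{s,u}(\mu)=0$ for all $c\in[C]$, $s\in\mathcal S^c$, $u\in\mathcal U^c_D$.
   Context: Model: classes $c\in[C]$ with masses $m^c>0$, finite state sets $\mathcal S^c$, nonempty finite admissible action sets $\mathcal A^c(s)$ ($\mathcal A^c=\bigcup_s\mathcal A^c(s)$), transition kernels $\phi^c(\cdot\mid s,a)\in\mathcal P(\mathcal S^c)$, action rates $\lambda^c>0$; $p=\sum_c|\mathcal S^c|,q=\sum_c|\mathcal A^c|$. $\mathcal U^c_D$ = deterministic policies ($s\mapsto u(s)\in\mathcal A^c(s)$; $u(a\mid s)=\mathbf 1[a=u(s)]$), $n^c=|\mathcal U^c_D|$. $\phi^{c,u}_{ss'}=\phi^c(s\mid s',u(s'))$. (A2): for all $c,u\in\mathcal U^c_D$, $\phi^{c,u}$ has exactly one recurrent communicating class; $\eta^{c,u}$ is the unique stationary distribution of the continuous-time chain with generator $\lambda^c(\phi^{c,u}-I)$. $X=\prod_c\{\mu^c\in\mathbb R_{\ge0}^{\mathcal S^c\times\mathcal U^c_D}:\sum\mu^c=m^c\}$, $X_{\mathcal S\times\mathcal A}=\prod_c\{\nu\in\mathbb R_{\ge0}^{\mathcal S^c\times\mathcal A^c}:\sum\nu=m^c\}$, $X^c_{\mathcal U_D}=\{\sigma\in\mathbb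 R^{n^c}_{\ge0}:\sum\sigma=m^c\}$; $\mu^c_{\mathcal S\times\mathcal A}[s,a]=\sum_u\mu^c[s,u]u(a\mid s)$; $\mu^c[\mathcal S^c,u]=\sum_s\mu^c[s,u]$, $\mu^c[\mathcal S^c,\cdot]=(\mu^c[\mathcal S^c,u])_u$. Rewards $r^c:\mathcal S^c\times\mathcal A^c\times X_{\mathcal S\times\mathcal A}\to\mathbb R$; (A1): each $r^c(s,a,\cdot)$ extends to $\mathbb R^{pq}_{\ge0}$ with an extension continuously differentiable on $X_{\mathcal S\times\mathcal A}$. $F^c_u(\mu)=\sum_{s}\sum_{a\in\mathcal A^c(s)}\eta^{c,u}(s)u(a\mid s)r^c(s,a,\mu_{\mathcal S\times\mathcal A})$, $F^c(\mu)=(F^c_u(\mu))_u$. MSNE: $\mu\in X$ with, for all $c,u$: (i) $\mu^c[\mathcal S^c,u]>0\Rightarrow F^c_u(\mu)\ge F^c_v(\mu)\ \forall v\in\mathcal U^c_D$; (ii) $\mu^c[s,u]=\eta^{c,u}(s)\mu^c[\mathcal S^c,u]$ for all $s$. Revision protocol of class $c$: $\rho^c:\mathbb R^{n^c}\times X^c_{\mathcal U_D}\to\mathbb R^{n^c\times n^c}_{\ge0}$ with revision rate $R^c>0$; (A3): $\rho^c$ Lipschitz and $R^c\ge\sup_{\mu\in X}\sum_{v\ne u}\rho^c_{uv}(F^c(\mu),\mu^c[\mathcal S^c,\cdot])$ for all $u$. Classes: imitative: $\rho^c_{uv}(F,\sigma)=r^c_{uv}(F,\sigma)\sigma_v/m^c$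 with $r^c$ Lipschitz, nonnegative, and $F_v\ge F_u\iff r^c_{kv}-r^c_{vk}\ge r^c_{ku}-r^c_{uk}$ for all $F,\sigma,u,v,k$; imitative via comparison: imitative with additionally $\mathrm{sign}(r^c_{uv}(F,\sigma))=\mathrm{sign}(\max(0,F_v-F_u))$; excess payoff: $\rho^c_{uv}(F,\sigma)=\tau^c_v(\hat F)$ with $\hat F=F-\mathbf 1F^\top\sigma/m^c$ and $\tau^c:\mathbb R^{n^c}\to\mathbb R^{n^c}_{\ge0}$ Lipschitz with $\hat F\notin\mathbb R^{n^c}_{\le0}\Rightarrow\tau^c(\hat F)^\top\hat F>0$; pairwise comparison: $\rho^c_{uv}(F,\sigma)=\tau^c_{uv}(F)$ with $\tau^c$ Lipschitz, nonnegative and $\mathrm{sign}(\tau^c_{uv}(F))=\mathrm{sign}(\max(0,F_v-F_u))$. Master equation vector fields: $f^{c,d}_{s,u}(\mu)=\lambda^c\sum_{s'}\sum_{a'\in\mathcal A^c(s')}\phi^c(s\mid s',a')u(a'\mid s')\mu^c[s',u]-\lambda^c\mu^c[s,u]$; $f^{c,r}_{s,u}(\mu)=\sum_{u'}\mu^c[s,u']\rho^c_{u'u}(F^c(\mu),\mu^c[\mathcal S^c,\cdot])-\mu^c[s,u]\sum_{u'}\rho^c_{uu'}(F^c(\mu),\mu^c[\mathcal S^c,\cdot])$. *)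

From HB Require Import structures.
From mathcomp Require Import all_boot all_order all_algebra.
From mathcomp Require Import all_classical all_reals all_analysis.
Unset Printing Implicit Defensive.
Import Order.TTheory GRing.Theory Num.Theory.
Import numFieldNormedType.Exports.
Local Open Scope ring_scope.
Local Open Scope classical_set_scope.

Definition policy (St Ac : finType) (Adm : St -> {set Ac}) : finType :=
  {u : {ffun St -> Ac} | [forall s, u s \in Adm s]}.
Arguments policy {St Ac} Adm.

Definition pol_prob (R : realType) (St Ac : finType) (Adm : St -> {set Ac})
  (u : policy Adm) (s : St) (a : Ac) : R := ((val u) s == a)%:R.
Arguments pol_prob R {St Ac Adm} u s a.

Definition SA (C : nat) (S A : 'I_C -> finType) : finType :=
  {c : 'I_C & (S c * A c)%type}.
Arguments SA {C} S A.

Section Model.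
Variables (R : realType) (C : nat) (S A : 'I_C -> finType)
  (Adm : forall c, S c -> {set A c}).


Definition inX (m : 'I_C -> R) (mu : forall c, S c -> policy (Adm c) -> R) : Prop :=
  forall c, (forall s u, 0 <= mu c s u) /\ \sum_(s : S c) \sum_(u : policy (Adm c)) mu c s u = m c.

Definition inXSA (m : 'I_C -> R) (nu : SA S A -> R) : Prop :=
  (forall t, 0 <= nu t) /\
  forall c, \sum_(s : S c) \sum_(a : A c) nu (existT _ c (s, a)) = m c.

Definition inXU (U : finType) (mc : R) (sigma : U -> R) : Prop :=
  (forall u, 0 <= sigma u) /\ \sum_u sigma u = mc.

Definition muSA (mu : forall c, S c -> policy (Adm c) -> R) : SA S A -> R :=
  fun t => \sum_(u : policy (Adm (tag t))) mu (tag t) (tagged t).1 u *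
             pol_prob R u (tagged t).1 (tagged t).2.

Definition massU (mu : forall c, S c -> policy (Adm c) -> R) (c : 'I_C) : policy (Adm c) -> R :=
  fun u => \sum_(s : S c) mu c s u.

Definition Fpay (eta : forall c, policy (Adm c) -> S c -> R)
  (r : forall c, S c -> A c -> (SA S A -> R) -> R)
  (mu : forall c, S c -> policy (Adm c) -> R) (c : 'I_C) : policy (Adm c) -> R :=
  fun u => \sum_(s : S c) \sum_(a in Adm c s)
             eta c u s * pol_prob R u s a * r c s a (muSA mu).

Definition MSNE (m : 'I_C -> R) (eta : forall c, policy (Adm c) -> S c -> R)
  (r : forall c, S c -> A c -> (SA S A -> R) -> R)
  (mu : forall c, S c -> policy (Adm c) -> R) : Prop :=
  inX m mu /\
  forall c (u : policy (Adm c)),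
    (0 < massU mu c u -> forall v : policy (Adm c), Fpay eta r mu c v <= Fpay eta r mu c u) /\
    (forall s, mu c s u = eta c u s * massU mu c u).

Definition f_d (lam : 'I_C -> R) (phi : forall c, S c -> A c -> S c -> R)
  (mu : forall c, S c -> policy (Adm c) -> R) (c : 'I_C) (s : S c) (u : policy (Adm c)) : R :=
  lam c * (\sum_(s' : S c) \sum_(a' in Adm c s')
              phi c s' a' s * pol_prob R u s' a' * mu c s' u)
  - lam c * mu c s u.

Definition f_r (eta : forall c, policy (Adm c) -> S c -> R)
  (r : forall c, S c -> A c -> (SA S A -> R) -> R)
  (rho : forall c, (policy (Adm c) -> R) -> (policy (Adm c) -> R) -> policy (Adm c) -> policy (Adm c) -> R)
  (mu : forall c, S c -> policy (Adm c) -> R) (c : 'I_C) (s : S c) (u : policy (Adm c)) : R :=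
  \sum_(u' : policy (Adm c)) mu c s u' * rho c (Fpay eta r mu c) (massU mu c) u' u
  - mu c s u * \sum_(u' : policy (Adm c)) rho c (Fpay eta r mu c) (massU mu c) u u'.

End Model.

Arguments inX {R C S A Adm} m mu.
Arguments inXSA {R C S A} m nu.
Arguments inXU {R U} mc sigma.
Arguments muSA {R C S A Adm} mu _.
Arguments massU {R C S A Adm} mu c _.
Arguments Fpay {R C S A Adm} eta r mu c _.
Arguments MSNE {R C S A Adm} m eta r mu.
Arguments f_d {R C S A Adm} lam phi mu c s u.
Arguments f_r {R C S A Adm} eta r rho mu c s u.

Definition trans_rel (R : realType) (St Ac : finType) (Adm : St -> {set Ac})
  (phi : St -> Ac -> St -> R) (u : policy Adm) : rel St :=
  fun x y => 0 < phi x (val u x) y.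
Arguments trans_rel {R St Ac Adm} phi u _ _.

Definition recurrent_state (St : finType) (e : rel St) (x : St) : Prop :=
  forall y, connect e x y -> connect e y x.
Arguments recurrent_state {St} e x.

Definition one_recurrent_class (St : finType) (e : rel St) : Prop :=
  (exists x, recurrent_state e x) /\
  (forall x y, recurrent_state e x -> recurrent_state e y -> connect e x y).
Arguments one_recurrent_class {St} e.

(* eta is a stationary distribution of the CTMC with generator lam (phi^u - I) *)
Definition ctmc_stationary (R : realType) (St Ac : finType) (Adm : St -> {set Ac})
  (lam : R) (phi : St -> Ac -> St -> R) (u : policy Adm) (eta : St -> R) : Prop :=
  (forall s, 0 <= eta s) /\ \sum_s eta s = 1 /\
  forall s, lam * (\sum_(s' : St) phi s' (val u s') s * eta s' - eta s) = 0.
Arguments ctmc_stationary {R St Ac Adm} lam phi u eta.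

(* ---------- Lipschitz notions (l^1 norms; all norms are equivalent) ---------- *)
Definition lipschitz_on_XU (R : realType) (U : finType) (mc : R)
  (h : (U -> R) -> (U -> R) -> R) : Prop :=
  exists L : R, forall F sigma F' sigma',
    inXU mc sigma -> inXU mc sigma' ->
    `|h F sigma - h F' sigma'| <=
      L * (\sum_w `|F w - F' w| + \sum_w `|sigma w - sigma' w|).
Arguments lipschitz_on_XU {R U} mc h.

Definition lipschitz_mx (R : realType) (U : finType) (mc : R)
  (g : (U -> R) -> (U -> R) -> U -> U -> R) : Prop :=
  exists L : R, forall F sigma F' sigma' u v,
    inXU mc sigma -> inXU mc sigma' ->
    `|g F sigma u v - g F' sigma' u v| <=
      L * (\sum_w `|F w - F' w| + \sum_w `|sigma w - sigma' w|).
Arguments lipschitz_mx {R U} mc g.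

Definition imitative_via_comparison (R : realType) (U : finType) (mc : R)
  (rho : (U -> R) -> (U -> R) -> U -> U -> R) : Prop :=
  exists rr : (U -> R) -> (U -> R) -> U -> U -> R,
    lipschitz_mx mc rr /\
    (forall F sigma u v, inXU mc sigma -> 0 <= rr F sigma u v) /\
    (forall F sigma u v k, inXU mc sigma ->
       (F u <= F v <->
        rr F sigma k u - rr F sigma u k <= rr F sigma k v - rr F sigma v k)) /\
    (forall F sigma u v, inXU mc sigma ->
       Num.sg (rr F sigma u v) = Num.sg (Num.max 0 (F v - F u))) /\
    (forall F sigma u v, inXU mc sigma ->
       rho F sigma u v = rr F sigma u v * sigma v / mc).
Arguments imitative_via_comparison {R U} mc rho.

Definition excess_payoff (R : realType) (U : finType) (mc : R)
  (rho : (U -> R) -> (U -> R) -> U -> U -> R) : Prop :=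
  exists tau : (U -> R) -> U -> R,
    (exists L : R, forall x y v, `|tau x v - tau y v| <= L * \sum_w `|x w - y w|) /\
    (forall x v, 0 <= tau x v) /\
    (forall x, ~ (forall v, x v <= 0) -> 0 < \sum_v tau x v * x v) /\
    (forall F sigma u v, inXU mc sigma ->
       rho F sigma u v = tau (fun w => F w - (\sum_w' F w' * sigma w') / mc) v).
Arguments excess_payoff {R U} mc rho.

Definition pairwise_comparison (R : realType) (U : finType) (mc : R)
  (rho : (U -> R) -> (U -> R) -> U -> U -> R) : Prop :=
  exists tau : (U -> R) -> U -> U -> R,
    (exists L : R, forall x y u v, `|tau x u v - tau y u v| <= L * \sum_w `|x w - y w|) /\
    (forall x u v, 0 <= tau x u v) /\
    (forall x u v, Num.sg (tau x u v) = Num.sg (Num.max 0 (x v - x u))) /\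
    (forall F sigma u v, inXU mc sigma -> rho F sigma u v = tau F u v).
Arguments pairwise_comparison {R U} mc rho.

Definition vecSA (R : realType) (C : nat) (S A : 'I_C -> finType)
  (nu : SA S A -> R) : 'rV[R]_#|SA S A| :=
  \row_i nu (enum_val i).
Arguments vecSA {R C S A} nu.

From HB Require Import structures.
From mathcomp Require Import all_boot all_order all_algebra.
From mathcomp Require Import all_classical all_reals all_analysis.
From mathcomp Require Import lra.

Set Implicit Arguments.
Unset Strict Implicit.
Unset Printing Implicit Defensive.
Import Order.TTheory GRing.Theory Num.Theory.
Import numFieldNormedType.Exports.
Local Open Scope ring_scope.
Local Open Scope classical_set_scope.

(* At a mixed stationary Nash equilibrium the mass on every policy u is spread
   over the states according to the stationary distribution eta^{c,u}, so the
   state dynamics f^d vanish.  Moreover only optimal policies carry mass, and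
   under each of the three protocol classes an agent playing an optimal policy
   never switches to another one: for comparison-based protocols switching needs
   a strictly better payoff, and for excess-payoff protocols all used policies
   earn the average payoff, so the excess payoff vector is nonpositive and zero
   at the current policy, which by acuteness and continuity of tau forces every
   other switching rate to vanish.  Every revision flow between two distinct
   policies is then zero, and so is f^r. *)

Section NetFlow.
Variables (R : pzRingType) (U : finType) (rho : U -> U -> R) (x : U -> R).

Lemma net_flow_eq0 u :
  (forall q, x q != 0 -> forall v, v != q -> rho q v = 0) ->
  \sum_v x v * rho v u - x u * \sum_v rho u v = 0.
Proof.
move=> no_switch; rewrite mulr_sumr -sumrB big1 // => v _.
have flow0 q w : w != q -> x q * rho q w = 0.
  move=> wq; have [->|/no_switch rho0] := eqVneq (x q) 0; first by rewrite mul0r.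
  by rewrite rho0 // mulr0.
have [->|vu] := eqVneq v u; first by rewrite subrr.
by rewrite (flow0 v u) 1?eq_sym // (flow0 u v) // subrr.
Qed.

End NetFlow.

Lemma small_transfer_pays (R : realFieldType) (t T K : R) :
  0 < t -> 0 <= T -> 0 <= K ->
  exists a b, [/\ 0 < a, 0 < b & b * (T + K * (a + b)) <= a * (t - K * (a + b))].
Proof.
move=> t_gt0 T_ge0 K_ge0.
have K1_gt0 : 0 < 4 * (K + 1) by lra.
have Tt_gt0 : 0 < T + t by lra.
set a := t / (4 * (K + 1)); set b := a * t / (2 * (T + t)).
have a_gt0 : 0 < a by rewrite divr_gt0.
have b_gt0 : 0 < b by apply: divr_gt0; nra.
have aK : a * (4 * (K + 1)) = t by rewrite mulfVK ?lt0r_neq0.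
have bTt : b * (T + t) = a * t / 2.
  by rewrite /b invfM mulrA mulfVK ?lt0r_neq0.
have b_le : b <= a / 2 by nra.
have Kab : K * (a + b) <= t / 2 by nra.
exists a, b; split => //.
have := ler_wpM2l (ltW a_gt0) Kab; have := ler_wpM2l (ltW b_gt0) Kab; nra.
Qed.

Section Transfer.
Variables (R : realDomainType) (U : finType) (x : U -> R) (w p : U) (a b : R).
Hypothesis wp : w != p.

Definition transfer : U -> R :=
  fun i => x i - (i == w)%:R * a + (i == p)%:R * b.

Lemma transfer_w : transfer w = x w - a.
Proof. by rewrite /transfer eqxx (negbTE wp) mul1r mul0r addr0. Qed.

Lemma transfer_p : transfer p = x p + b.
Proof. by rewrite /transfer eqxx eq_sym (negbTE wp) mul1r mul0r subr0. Qed.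

Lemma transfer_other i : i != w -> i != p -> transfer i = x i.
Proof. by move=> /negbTE iw /negbTE ip; rewrite /transfer iw ip !mul0r subr0 addr0. Qed.

Lemma transfer_dist : 0 <= a -> 0 <= b -> \sum_i `|x i - transfer i| = a + b.
Proof.
move=> a_ge0 b_ge0; rewrite (bigD1 w) //= (bigD1 p) 1?eq_sym //=.
rewrite big1 => [|i /andP[iw ip]]; last by rewrite transfer_other // subrr normr0.
rewrite transfer_w transfer_p addr0.
have -> : x w - (x w - a) = a by rewrite opprB addrC subrK.
have -> : x p - (x p + b) = - b by rewrite opprD addNKr.
by rewrite normrN !ger0_norm.
Qed.

Lemma weighted_transfer_le (g : U -> R) :
  (forall v, 0 <= g v) -> (forall v, x v <= 0) ->
  \sum_v g v * transfer v <= g w * (x w - a) + g p * (x p + b).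
Proof.
move=> g_ge0 x_le0; rewrite (bigD1 w) //= (bigD1 p) 1?eq_sym //= addrA.
rewrite transfer_w transfer_p -[leRHS]addr0 lerD2l.
apply: sumr_le0 => i /andP[iw ip]; rewrite transfer_other //.
exact: mulr_ge0_le0.
Qed.

End Transfer.

Section ExcessPayoff.
Variables (R : realFieldType) (U : finType) (tau : (U -> R) -> U -> R) (L : R).
Hypotheses (tau_lip : forall x y v, `|tau x v - tau y v| <= L * \sum_w `|x w - y w|)
  (tau_ge0 : forall x v, 0 <= tau x v)
  (tau_acute : forall x, ~ (forall v, x v <= 0) -> 0 < \sum_v tau x v * x v).

(* Lowering x slightly at w and raising it slightly at p makes it positive
   only at p; since tau stays close to tau x, the loss at w outweighs the gain
   at p, contradicting acuteness unless tau x w = 0. *)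
Lemma excess_tau_eq0 x p w :
  (forall v, x v <= 0) -> x p = 0 -> w != p -> tau x w = 0.
Proof.
move=> x_le0 xp0 wp; have [//|tw_neq0] := eqVneq (tau x w) 0.
have tw_gt0 : 0 < tau x w by rewrite lt0r tw_neq0 tau_ge0.
have [a [b [a_gt0 b_gt0 pays]]] :=
  small_transfer_pays tw_gt0 (tau_ge0 x p) (normr_ge0 L).
set y := transfer x w p a b.
have dist : \sum_i `|x i - y i| = a + b by apply: transfer_dist; rewrite ?ltW.
have L_le : L * (a + b) <= `|L| * (a + b) by rewrite ler_wpM2r ?ler_norm //; lra.
have lo : tau x w - `|L| * (a + b) <= tau y w.
  by have /ler_normlP[_ lip] := tau_lip x y w; rewrite dist in lip; lra.
have hi : tau y p <= tau x p + `|L| * (a + b).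
  by have /ler_normlP[lip _] := tau_lip x y p; rewrite dist in lip; lra.
have y_pos : ~ (forall v, y v <= 0).
  by move=> /(_ p); rewrite /y transfer_p // xp0; lra.
have := weighted_transfer_le a b wp (tau_ge0 y) x_le0; rewrite -/y xp0 add0r.
have := tau_acute y_pos; have := x_le0 w; have := tau_ge0 y w.
have := tau_ge0 y p; nra.
Qed.

End ExcessPayoff.

Section OptimalSupport.
Variables (R : realType) (U : finType) (mc : R) (F sigma : U -> R).
Hypotheses (sigmaX : inXU mc sigma)
  (support_opt : forall q, 0 < sigma q -> forall v, F v <= F q).

Lemma mass_gt0_of_support q : 0 < sigma q -> 0 < mc.
Proof.
move=> sq; rewrite -sigmaX.2 (bigD1 q) //=.
by apply: ltr_wpDr => //; apply: sumr_ge0 => v _; exact: sigmaX.1.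
Qed.

Lemma mean_payoff_support q :
  0 < sigma q -> \sum_w F w * sigma w = F q * mc.
Proof.
move=> sq; rewrite -sigmaX.2 mulr_sumr; apply: eq_bigr => w _.
have [->|sw_neq0] := eqVneq (sigma w) 0; first by rewrite !mulr0.
have sw : 0 < sigma w by rewrite lt0r sw_neq0 sigmaX.1.
by congr (_ * _); apply/eqP; rewrite eq_le support_opt // support_opt.
Qed.

Lemma optimal_outflow_eq0 rho q v :
  imitative_via_comparison mc rho \/ excess_payoff mc rho \/
    pairwise_comparison mc rho ->
  0 < sigma q -> v != q -> rho F sigma q v = 0.
Proof.
move=> proto sq vq.
have no_gain : Num.max 0 (F v - F q) = 0.
  by apply: max_l; rewrite subr_le0 support_opt.
case: proto => [[rr [_ [_ [_ [rr_sg ->]]]]] | [[tau [[L tau_lip] [tau_ge0 [tau_acute ->]]]]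
  | [tau [_ [_ [tau_sg ->]]]]]] //.
- move: (rr_sg F sigma q v sigmaX); rewrite no_gain sgr0 => /eqP.
  by rewrite sgr_eq0 => /eqP ->; rewrite !mul0r.
- have mc_neq0 := lt0r_neq0 (mass_gt0_of_support sq).
  apply: (excess_tau_eq0 tau_lip tau_ge0 tau_acute _ _ vq).
  + by move=> i; rewrite (mean_payoff_support sq) mulfK // subr_le0 support_opt.
  + by rewrite (mean_payoff_support sq) mulfK // subrr.
- by move: (tau_sg F q v); rewrite no_gain sgr0 => /eqP; rewrite sgr_eq0 => /eqP.
Qed.

End OptimalSupport.

Lemma sum_pol_prob (R : realType) (St Ac : finType) (Adm : St -> {set Ac})
  (u : policy Adm) (s : St) (g : Ac -> R) :
  \sum_(a in Adm s) g a * pol_prob R u s a = g (val u s).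
Proof.
rewrite (bigD1 (val u s)) /=; last exact: (forallP (valP u)) s.
rewrite /pol_prob eqxx mulr1 big1 ?addr0 // => a /andP[_ au].
by rewrite eq_sym (negbTE au) mulr0.
Qed.

Lemma massU_inXU (R : realType) (C : nat) (S A : 'I_C -> finType)
  (Adm : forall c : 'I_C, S c -> {set A c})
  (mu : forall c : 'I_C, S c -> policy (Adm c) -> R) (m : 'I_C -> R) (c : 'I_C) :
  inX m mu -> inXU (m c) (massU mu c).
Proof.
move=> muX; split; last by rewrite /massU exchange_big; exact: (muX c).2.
by move=> u; apply: sumr_ge0 => s _; exact: (muX c).1.
Qed.

Lemma f_d_stationary_eq0 (R : realType) (C : nat) (S A : 'I_C -> finType)
  (Adm : forall c : 'I_C, S c -> {set A c})
  (mu : forall c : 'I_C, S c -> policy (Adm c) -> R) (lam : 'I_C -> R)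
  (phi : forall c, S c -> A c -> S c -> R)
  (eta : forall c, policy (Adm c) -> S c -> R) (c : 'I_C) (s : S c) (u : policy (Adm c)) :
  ctmc_stationary (lam c) (phi c) u (eta c u) ->
  (forall s', mu c s' u = eta c u s' * massU mu c u) ->
  f_d lam phi mu c s u = 0.
Proof.
move=> [_ [_ stat]] mu_eta.
have inner s' : \sum_(a' in Adm c s') phi c s' a' s * pol_prob R u s' a' * mu c s' u
    = phi c s' (val u s') s * eta c u s' * massU mu c u.
  by rewrite -mulr_suml (sum_pol_prob _ _ (fun a => phi c s' a s)) mu_eta mulrA.
rewrite /f_d (eq_bigr _ (fun s' _ => inner s')) -mulr_suml mu_eta.
by rewrite -mulrBr -mulrBl mulrA stat mul0r.
Qed.

Theorem theorem4 (R : realType) (C : nat) (S A : 'I_C -> finType)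
  (Adm : forall c : 'I_C, S c -> {set A c})
  (m lam Rrate : 'I_C -> R)
  (phi : forall c : 'I_C, S c -> A c -> S c -> R)
  (eta : forall c : 'I_C, policy (Adm c) -> S c -> R)
  (r : forall c : 'I_C, S c -> A c -> (SA S A -> R) -> R)
  (rho : forall c : 'I_C,
     (policy (Adm c) -> R) -> (policy (Adm c) -> R) ->
     policy (Adm c) -> policy (Adm c) -> R)
  (mu : forall c : 'I_C, S c -> policy (Adm c) -> R) :
  (* model data *)
  (forall c, 0 < m c) ->
  (forall c (s : S c), Adm c s != finset.set0) ->
  (forall c (a : A c), exists s : S c, a \in Adm c s) ->
  (forall c (s : S c) (a : A c), a \in Adm c s ->
     (forall s', 0 <= phi c s a s') /\ \sum_(s' : S c) phi c s a s' = 1) ->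
  (forall c, 0 < lam c) ->
  (* (A1) *)
  (forall c (s : S c) (a : A c),
     exists g : 'rV[R]_#|SA S A| -> R,
       (forall nu, inXSA m nu -> r c s a nu = g (vecSA nu)) /\
       (forall nu, inXSA m nu -> differentiable g (vecSA nu)) /\
       (forall i : 'I_#|SA S A|,
          {within [set vecSA nu | nu in [set nu | inXSA m nu]],
             continuous (fun x => derive g x (delta_mx 0 i))})) ->
  (* (A2) *)
  (forall c (u : policy (Adm c)), one_recurrent_class (trans_rel (phi c) u)) ->
  (forall c (u : policy (Adm c)), ctmc_stationary (lam c) (phi c) u (eta c u)) ->
  (* revision protocols map R^n x X_U into nonnegative matrices *)
  (forall c F sigma (u v : policy (Adm c)), inXU (m c) sigma -> 0 <= rho c F sigma u v) ->
  (* (A3) *)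
  (forall c, lipschitz_mx (m c) (rho c)) ->
  (forall c, 0 < Rrate c) ->
  (forall mu' : forall c : 'I_C, S c -> policy (Adm c) -> R, inX m mu' ->
     forall c (u : policy (Adm c)),
       \sum_(v : policy (Adm c) | v != u) rho c (Fpay eta r mu' c) (massU mu' c) u v
         <= Rrate c) ->
  (* protocol classes *)
  (forall c, imitative_via_comparison (m c) (rho c) \/
             excess_payoff (m c) (rho c) \/
             pairwise_comparison (m c) (rho c)) ->
  (* conclusion *)
  MSNE m eta r mu ->
  forall c (s : S c) (u : policy (Adm c)),
    f_d lam phi mu c s u + f_r eta r rho mu c s u = 0.
Proof.
move=> _ _ _ _ _ _ _ stat _ _ _ _ proto [muX msne] c s u.
have sigmaX := massU_inXU c muX.
rewrite (f_d_stationary_eq0 s (stat c u) (msne c u).2) add0r.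
apply: net_flow_eq0 => q mu_neq0 v vq.
have mass_gt0 : 0 < massU mu c q.
  rewrite lt0r sigmaX.1 andbT; apply: contra mu_neq0 => /eqP mass0.
  by rewrite (msne c q).2 mass0 mulr0.
exact: (optimal_outflow_eq0 sigmaX (fun q => (msne c q).1)).
Qed.
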